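(* Let $B$ be a Horn program, $E^+,E^-$ finite sets of ground atoms, and $H\in\mathcal{H}_{D,C}$ a hypothesis with $tp(H,B,E^+)=|E^+|$. If $H'\in\mathcal{H}_{D,C}$ is a generalization of $H$, then $S_{ACC}(H,B,E^+,E^-)\geq S_{ACC}(H',B,E^+,E^-)$.
   Context: A definite clause is a clause with exactly one positive literal. A hypothesis is a finite set of definite clauses; $\mathcal{H}_{D,C}$ denotes the hypothesis space of hypotheses consistent with a declaration bias $D$ and hypothesis constraints $C$ (only membership matters). $B$ is background knowledge, $E^+$ positive and $E^-$ negative examples. For a hypothesis $H$: $tp(H,B,E^+)=|\{e\in E^+ : H\cup B\models e\}|$, $tn(H,B,E^-)=|\{e\in E^- : H\cup B\not\models e\}|$, and $S_{ACC}(H,B,E^+,E^-)=tp(H,B,E^+)+tn(H,B,E^-)$. A clause $C_1$ subsumes a clause $C_2$ iff there is a substitution $\theta$ with $C_1\theta\subseteq C_2$. A clausal theory $T_1$ subsumes $T_2$ ($T_1\preceq T_2$) iff every clause of $T_2$ is subsumed by some clause of $T_1$. $T_1$ is a generalization of $T_2$ iff $T_1\preceq T_2$, and a specialization of $T_2$ iff $T_2\preceq T_1$. *)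

From Stdlib Require Import List Arith ClassicalEpsilon.
Import ListNotations.

(* Terms over a countable signature: variables and function symbols
   (constants are 0-ary function symbols). *)
Inductive term : Type :=
| Var : nat -> term
| Fn : nat -> list term -> term.

Inductive atom : Type := Atom : nat -> list term -> atom.

Inductive literal : Type :=
| Pos : atom -> literal
| Neg : atom -> literal.

(* A clause is a finite set of literals (represented by a list; only
   membership matters); a clausal theory is a finite set of clauses. *)
Definition clause := list literal.
Definition theory := list clause.

Definition definite (C : clause) : Prop :=
  exists a, In (Pos a) C /\ forall b, In (Pos b) C -> b = a.

Fixpoint ground_term (t : term) : Prop :=
  match t with
  | Var _ => False
  | Fn _ ts => (fix gl (l : list term) : Prop :=
                  match l with [] => True | u :: l' => ground_term u /\ gl l' end) ts
  end.
Definition ground_atom (a : atom) : Prop :=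
  match a with Atom _ ts => Forall ground_term ts end.

Definition subst := nat -> term.
Fixpoint subst_term (th : subst) (t : term) : term :=
  match t with
  | Var n => th n
  | Fn f ts => Fn f (map (subst_term th) ts)
  end.
Definition subst_atom (th : subst) (a : atom) : atom :=
  match a with Atom p ts => Atom p (map (subst_term th) ts) end.
Definition subst_lit (th : subst) (l : literal) : literal :=
  match l with Pos a => Pos (subst_atom th a) | Neg a => Neg (subst_atom th a) end.

Definition clause_subsumes (C1 C2 : clause) : Prop :=
  exists th : subst, forall l, In l C1 -> In (subst_lit th l) C2.

Definition theory_subsumes (T1 T2 : theory) : Prop :=
  forall C2, In C2 T2 -> exists C1, In C1 T1 /\ clause_subsumes C1 C2.

Definition generalization (T1 T2 : theory) : Prop := theory_subsumes T1 T2.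

Record structure := {
  dom : Type;
  dom_inhabited : inhabited dom;
  fint : nat -> list dom -> dom;
  pint : nat -> list dom -> Prop }.

Fixpoint teval (M : structure) (v : nat -> dom M) (t : term) : dom M :=
  match t with
  | Var n => v n
  | Fn f ts => fint M f (map (teval M v) ts)
  end.

Definition atom_true (M : structure) (v : nat -> dom M) (a : atom) : Prop :=
  match a with Atom p ts => pint M p (map (teval M v) ts) end.

Definition lit_true (M : structure) (v : nat -> dom M) (l : literal) : Prop :=
  match l with Pos a => atom_true M v a | Neg a => ~ atom_true M v a end.

Definition clause_true (M : structure) (C : clause) : Prop :=
  forall v : nat -> dom M, exists l, In l C /\ lit_true M v l.

Definition model (M : structure) (T : theory) : Prop :=
  forall C, In C T -> clause_true M C.

Definition entails (T : theory) (a : atom) : Prop :=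
  forall M : structure, model M T -> forall v : nat -> dom M, atom_true M v a.

Fixpoint count_prop {A : Type} (P : A -> Prop) (l : list A) : nat :=
  match l with
  | [] => 0
  | x :: l' => (if excluded_middle_informative (P x) then 1 else 0) + count_prop P l'
  end.

(* Examples are finite sets of ground atoms, represented by duplicate-free
   lists. *)
Definition tp (H B : theory) (Ep : list atom) : nat :=
  count_prop (fun e => entails (H ++ B) e) Ep.
Definition tn (H B : theory) (En : list atom) : nat :=
  count_prop (fun e => ~ entails (H ++ B) e) En.
Definition S_ACC (H B : theory) (Ep En : list atom) : nat :=
  tp H B Ep + tn H B En.

(* Every model of a generalization H' of H is a model of H: each clause of H
   contains a substitution instance of a clause of H', and an instance of a
   true clause is true.  Hence H' ∪ B entails whatever H ∪ B entails, so H'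
   rejects no more negative examples than H does, while H already covers all
   positive examples. *)
From Stdlib Require Import List Lia ClassicalEpsilon.

Fixpoint teval_subst_term (M : structure) (v : nat -> dom M) (th : subst) (t : term)
  {struct t} :
  teval M v (subst_term th t) = teval M (fun n => teval M v (th n)) t.
Proof.
  destruct t as [n | f ts]; simpl; [reflexivity |].
  f_equal. rewrite map_map.
  induction ts as [| u ts IH]; simpl; [reflexivity |].
  rewrite teval_subst_term. f_equal. exact IH.
Qed.

Lemma atom_true_subst_atom (M : structure) (v : nat -> dom M) (th : subst) (a : atom) :
  atom_true M v (subst_atom th a) <-> atom_true M (fun n => teval M v (th n)) a.
Proof.
  destruct a as [p ts]; simpl.
  rewrite map_map, (map_ext _ _ (teval_subst_term M v th)).
  reflexivity.
Qed.

Lemma lit_true_subst_lit (M : structure) (v : nat -> dom M) (th : subst) (l : literal) :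
  lit_true M v (subst_lit th l) <-> lit_true M (fun n => teval M v (th n)) l.
Proof.
  destruct l as [a | a]; simpl; rewrite atom_true_subst_atom; reflexivity.
Qed.

Lemma clause_true_subsumes (M : structure) (C1 C2 : clause) :
  clause_subsumes C1 C2 -> clause_true M C1 -> clause_true M C2.
Proof.
  intros [th Hth] HC1 v.
  destruct (HC1 (fun n => teval M v (th n))) as [l [Hl Hlv]].
  exists (subst_lit th l).
  split; [apply Hth, Hl | apply lit_true_subst_lit, Hlv].
Qed.

Lemma model_theory_subsumes (M : structure) (T1 T2 : theory) :
  theory_subsumes T1 T2 -> model M T1 -> model M T2.
Proof.
  intros Hsub HT1 C2 HC2.
  destruct (Hsub C2 HC2) as [C1 [HC1 HC12]].
  exact (clause_true_subsumes M C1 C2 HC12 (HT1 C1 HC1)).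
Qed.

Lemma model_app (M : structure) (T1 T2 : theory) :
  model M (T1 ++ T2) <-> model M T1 /\ model M T2.
Proof.
  unfold model; split.
  - intros HT; split; intros C HC; apply HT, in_or_app; auto.
  - intros [HT1 HT2] C HC; destruct (in_app_or _ _ _ HC); auto.
Qed.

Lemma entails_app_theory_subsumes (T1 T2 B : theory) (a : atom) :
  theory_subsumes T1 T2 -> entails (T2 ++ B) a -> entails (T1 ++ B) a.
Proof.
  intros Hsub HT2 M HM.
  apply model_app in HM as [HM1 HMB].
  apply HT2, model_app.
  split; [exact (model_theory_subsumes M T1 T2 Hsub HM1) | exact HMB].
Qed.

Lemma count_prop_le_length {A : Type} (P : A -> Prop) (l : list A) :
  count_prop P l <= length l.
Proof.
  induction l as [| x l IH]; simpl; [lia |].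
  destruct (excluded_middle_informative (P x)); lia.
Qed.

Lemma count_prop_impl {A : Type} (P Q : A -> Prop) (l : list A) :
  (forall x, P x -> Q x) -> count_prop P l <= count_prop Q l.
Proof.
  intros HPQ.
  induction l as [| x l IH]; simpl; [lia |].
  destruct (excluded_middle_informative (P x)) as [HP | HP];
    destruct (excluded_middle_informative (Q x)) as [HQ | HQ]; try lia.
  exfalso; exact (HQ (HPQ x HP)).
Qed.

Lemma tp_le_length (H B : theory) (Ep : list atom) : tp H B Ep <= length Ep.
Proof. apply count_prop_le_length. Qed.

Lemma tn_generalization (H H' B : theory) (En : list atom) :
  generalization H' H -> tn H' B En <= tn H B En.
Proof.
  intros Hgen.
  apply count_prop_impl.
  intros e HnH' HH.
  exact (HnH' (entails_app_theory_subsumes H' H B e Hgen HH)).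
Qed.

Theorem proposition4p8
  (Hspace : theory -> Prop)
  (B : theory) (HB : Forall definite B)
  (Ep En : list atom)
  (HEp_nd : NoDup Ep) (HEn_nd : NoDup En)
  (HEp_g : Forall ground_atom Ep) (HEn_g : Forall ground_atom En)
  (H : theory) (HH_def : Forall definite H) (HH_sp : Hspace H)
  (Htp : tp H B Ep = length Ep)
  (H' : theory) (HH'_def : Forall definite H') (HH'_sp : Hspace H')
  (Hgen : generalization H' H) :
  S_ACC H' B Ep En <= S_ACC H B Ep En.
Proof.
  unfold S_ACC.
  pose proof (tp_le_length H' B Ep).
  pose proof (tn_generalization H H' B En Hgen).
  lia.
Qed.
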